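(* Let $\mathcal T\in\Sigma^n$ be a text and fix $\pi=\mathrm{IPA}$. Suppose we have access to a text oracle supporting the extraction of $\ell$ contiguous characters of $\mathcal T$ with $O(1+\ell/B)$ I/O complexity. There is a search algorithm that requires just the array $\mathtt{st\text{-}colex}^-$, fitting in $|\mathtt{st\text{-}colex}^-|\le\bar r$ words, on top of the text oracle, and locates the primary occurrence of any $P\in\Sigma^m$ (i.e., the occurrence $\mathcal T[i,i+m-1]=P$ minimizing $\mathrm{IPA}[i]$) with $O(d\log|\mathtt{st\text{-}colex}^-|\cdot(1+m/B))\subseteq O(d\log\bar r\cdot(1+m/B))$ I/O complexity, where $d$ is the node depth of $\mathrm{locus}(P)$ in the suffix tree of $\mathcal T$.
   Context: A text is a string $\mathcal T\in\Sigma^n$ over an integer alphabet whose last symbol $\mathcal T[n]=\$$ occurs only there and is smallest. $B$ is the number of integers per I/O block. $\mathrm{IPA}[i]$ is the colexicographic rank of prefix $\mathcal T[1,i]$ among all prefixes. For $i\ne j$, $\mathrm{rlce}(i,j)$ is the length of the longest common prefix of $\mathcal T[i,n]$ and $\mathcal T[j,n]$. With $\pi=\mathrm{IPA}$, $\mathrm{LPF}_\pi[i]=0$ if $\pi(i)=1$, else $\mathrm{LPF}_\pi[i]=\max_{\pi(j)<\pi(i)}\mathrm{rlce}(j,i)$, and $\mathtt{st\text{-}colex}^-$ is the set $\{i+\mathrm{LPF}_\pi[i]:i\in[n]\}$ sorted colexicographically by prefixes $\mathcal T[1,j]$. $\bar r$ is the number of maximal equal-letter runs of the string obtained by sorting all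 rotations of $\mathcal T$ colexicographically and concatenating their first characters. The node depth of $\mathrm{locus}(P)$ is the number of suffix tree edges traversed (including a partially traversed last edge) when reading $P$ from the root. *)

From mathcomp Require Import all_boot.
Set Implicit Arguments. Unset Strict Implicit. Unset Printing Implicit Defensive.

Fixpoint lex_lt (s t : seq nat) : bool :=
  match s, t with
  | [::], [::] => false
  | [::], _ :: _ => true
  | _ :: _, [::] => false
  | x :: s', y :: t' => (x < y) || ((x == y) && lex_lt s' t')
  end.

Definition colex_lt (s t : seq nat) : bool := lex_lt (rev s) (rev t).

(* T is a text: nonempty, last symbol $ occurs only there and is smallest *)
Definition is_text (T : seq nat) : bool :=
  (0 < size T) && all (fun x => last 0 T < x) (take (size T).-1 T).

(* 1-indexed substring T[i, i+l-1] (truncated at the end of T) *)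
Definition extract (T : seq nat) (i l : nat) : seq nat := take l (drop i.-1 T).

(* prefix T[1,i] and suffix T[i,n] (1-indexed) *)
Definition prefix_of (T : seq nat) (i : nat) : seq nat := take i T.
Definition suffix_of (T : seq nat) (i : nat) : seq nat := drop i.-1 T.

Definition IPA (T : seq nat) (i : nat) : nat :=
  (count (fun j => colex_lt (prefix_of T j) (prefix_of T i)) (iota 1 (size T))).+1.

Fixpoint lcp (s t : seq nat) : nat :=
  match s, t with
  | x :: s', y :: t' => if x == y then (lcp s' t').+1 else 0
  | _, _ => 0
  end.

Definition rlce (T : seq nat) (i j : nat) : nat := lcp (suffix_of T i) (suffix_of T j).

Definition LPF (T : seq nat) (i : nat) : nat :=
  if IPA T i == 1 then 0
  else \max_(j <- iota 1 (size T) | IPA T j < IPA T i) rlce T j i.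

Definition st_colex_minus (T : seq nat) : seq nat :=
  sort (fun a b => ~~ colex_lt (prefix_of T b) (prefix_of T a))
       (undup [seq i + LPF T i | i <- iota 1 (size T)]).

Definition runs (s : seq nat) : nat :=
  match s with
  | [::] => 0
  | x :: s' => (count id [seq p.1 != p.2 | p <- zip (x :: s') s']).+1
  end.

Definition rbar (T : seq nat) : nat :=
  runs [seq head 0 u | u <- sort (fun u v => ~~ colex_lt v u)
                                 [seq rot k T | k <- iota 0 (size T)]].

Definition occurs (T P : seq nat) (i : nat) : bool :=
  (1 <= i) && (i <= size T) && (extract T i (size P) == P).

Definition is_primary (T P : seq nat) (i : nat) : Prop :=
  occurs T P i /\ forall j, occurs T P j -> IPA T i <= IPA T j.

Definition followers (T u : seq nat) : seq nat :=
  [seq nth 0 T (i.-1 + size u) |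
     i <- iota 1 (size T) & (i.-1 + size u < size T) && (extract T i (size u) == u)].

(* u is right-maximal: followed by at least two distinct characters;
   these (nonempty) strings are the internal nodes of the suffix tree *)
Definition right_maximal (T u : seq nat) : bool := 1 < size (undup (followers T u)).

(* explicit non-root nodes of the suffix tree of T: internal nodes and leaves *)
Definition st_node (T u : seq nat) : bool :=
  (u != [::]) && (right_maximal T u || (u \in [seq suffix_of T i | i <- iota 1 (size T)])).

(* node depth of locus(P) (P nonempty, occurring in T): number of edges
   traversed, the partially traversed last edge included, when reading P
   from the root = 1 + number of explicit non-root nodes spelling a proper
   nonempty prefix of P *)
Definition locus_node_depth (T P : seq nat) : nat :=
  (count (fun k => st_node T (take k P)) (iota 1 (size P).-1)).+1.

(* A program interacts with
   - the text oracle: Extract i l returns T[i, i+l-1], cost 1 + l/B I/Os;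
   - the stored array A (= st-colex^-), read by blocks of B words:
     ReadBlock b returns A[b*B .. b*B+B-1] (0-indexed), cost 1 I/O.
   Internal computation is free (standard I/O model). *)
Inductive prog : Type :=
| Ret of nat
| Extract of nat & nat & (seq nat -> prog)
| ReadBlock of nat & (seq nat -> prog).

Fixpoint run (T A : seq nat) (B : nat) (p : prog) : nat * nat :=
  match p with
  | Ret a => (a, 0)
  | Extract i l k =>
      let r := run T A B (k (extract T i l)) in (r.1, 1 + l %/ B + r.2)
  | ReadBlock b k =>
      let r := run T A B (k (take B (drop (b * B) A))) in (r.1, r.2.+1)
  end.

(* The rotation [rot k T] ends with the sentinel followed
   by the prefix T[1, k], so rotations sort colexicographically like these
   prefixes, and [rot k T] begins with T[k+1].  Let j = i + LPF[i] and suppose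
   the rotation preceding [rot (j-1) T] is [rot f T] with T[f+1] = T[j].  Then
   T[1, f] ends with w = T[i, j-1] (if LPF[i] > 0, because the prefix ending the
   copy of w at the witness of LPF[i] lies colex-between), and the start of this
   copy precedes i in IPA order while sharing w T[j] with i, contradicting the
   maximality of LPF[i].  So distinct elements of the array start distinct runs.

   Invariant: the primary occurrence i of P[1, k] ends at i - 1 + k,
   an element of the array.  As the array is sorted by the colex order of the
   prefixes it ends, a binary search comparing the last k letters of each probed
   prefix with P[1, k] finds this element, and one extraction compares
   T[i, i + m - 1] with P.  On a mismatch after L letters, P[1, L] is
   right-maximal, i.e. a node on the path to locus(P), and the primary
   occurrence i' of P[1, L + 1] has LPF[i'] = L, so the invariant holds for
   k = L + 1.  A round costs O(log |array| (1 + m/B)) I/Os and passes a new node. *)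

From mathcomp Require Import all_boot all_order zify.
Set Implicit Arguments. Unset Strict Implicit. Unset Printing Implicit Defensive.
Import Order.TTheory.

Lemma lex_ltE (s t : seq nat) : lex_lt s t = (s < t :> seqlexi nat)%O.
Proof.
elim: s t => [|x s IH] [|y t] //=.
by rewrite ltxi_cons IH !leEnat; case: ssrnat.ltngtP.
Qed.

Lemma colex_ltE (s t : seq nat) : colex_lt s t = (rev s < rev t :> seqlexi nat)%O.
Proof. exact: lex_ltE. Qed.

Lemma colex_ltxx s : colex_lt s s = false.
Proof. by rewrite colex_ltE ltxx. Qed.

Lemma colex_lt_trans a b c : colex_lt a b -> colex_lt b c -> colex_lt a c.
Proof. rewrite !colex_ltE; exact: lt_trans. Qed.

Lemma colex_le_trans a b c : ~~ colex_lt b a -> ~~ colex_lt c b -> ~~ colex_lt c a.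
Proof. rewrite !colex_ltE -!leNgt => ab bc; exact: le_trans ab bc. Qed.

Lemma colex_lt_asym a b : colex_lt a b -> ~~ colex_lt b a.
Proof. by rewrite !colex_ltE -leNgt => /ltW. Qed.

Lemma colex_nlt_eqVgt a b : ~~ colex_lt a b -> a = b \/ colex_lt b a.
Proof.
rewrite !colex_ltE -leNgt le_eqVlt => /orP[/eqP/(can_inj revK)|]; by [left|right].
Qed.

Lemma colex_lt_total a b : a != b -> colex_lt a b || colex_lt b a.
Proof. by rewrite !colex_ltE -neq_lt (inj_eq (can_inj revK)) eq_sym. Qed.

Lemma colex_lt_catr x y u : colex_lt (x ++ u) (y ++ u) = colex_lt x y.
Proof. by rewrite /colex_lt !rev_cat; elim: (rev u) => //= c s ->; rewrite ltnn eqxx. Qed.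

Lemma colex_lt_catl x s w : size s = size w -> colex_lt (x ++ s) w = colex_lt s w.
Proof.
rewrite /colex_lt rev_cat -(size_rev s) -(size_rev w).
elim: (rev s) (rev w) => [|a s' IH] [|b w'] //=; first by case: (rev x).
by case=> /IH ->.
Qed.

Lemma colex_between_suffix v u1 u2 w :
  ~~ colex_lt v (u1 ++ w) -> ~~ colex_lt (u2 ++ w) v -> exists u, v = u ++ w.
Proof.
rewrite /colex_lt !rev_cat => h1 h2.
suff [u ev] : exists u, rev v = rev w ++ u.
  by exists (rev u); rewrite -[v]revK ev rev_cat revK.
elim: (rev w) (rev v) h1 h2 => [|a w' IH] [|b v'] //=; try by eexists.
rewrite !negb_or !negb_and => /andP[ba h1] /andP[ab h2].
have eab : a = b by lia.
subst b; rewrite eqxx /= in h1 h2.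
by have [u ->] := IH v' h1 h2; exists u.
Qed.

Lemma lex_lt_sentinel z x y s t :
  all (fun c => z < c) s -> all (fun c => z < c) t -> s != t ->
  lex_lt (s ++ z :: x) (t ++ z :: y) = lex_lt s t.
Proof.
elim: s t => [|a s IH] [|b t] //=.
- by move=> _ /andP[zb _] _; rewrite zb.
- by move=> /andP[za _] _ _; rewrite ltnNge (ltnW za) /= gtn_eqF.
- move=> /andP[za hs] /andP[zb ht]; rewrite eqseq_cons.
  by case: (eqVneq a b) => [<-|//] /= ne; rewrite ltnn IH.
Qed.

Lemma colex_lt_sentinel z x y s t :
  all (fun c => z < c) s -> all (fun c => z < c) t -> s != t ->
  colex_lt (x ++ z :: s) (y ++ z :: t) = colex_lt s t.
Proof.
move=> hs ht ne; rewrite /colex_lt !rev_cat !rev_cons -!cats1 -!catA.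
by apply: lex_lt_sentinel; rewrite ?all_rev // (inj_eq (can_inj revK)).
Qed.

Lemma leq_lcp l s t : (l <= lcp s t) = (l <= size s) && (take l s == take l t).
Proof.
elim: s t l => [|x s IH] [|y t] [|l] //=; rewrite ?andbF //.
by case: (eqVneq x y) => [<-|ne]; rewrite eqseq_cons ?eqxx ?ltnS ?IH // (negbTE ne) andbF.
Qed.

Lemma lcp_sym s t : lcp s t = lcp t s.
Proof. by elim: s t => [|x s IH] [|y t] //=; rewrite eq_sym IH. Qed.

Lemma lcp_le_size s t : lcp s t <= size s.
Proof. by move: (leqnn (lcp s t)); rewrite leq_lcp => /andP[]. Qed.

Lemma take_lcp s t : take (lcp s t) s = take (lcp s t) t.
Proof. by move: (leqnn (lcp s t)); rewrite leq_lcp => /andP[_ /eqP]. Qed.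

Section Text.

Variable T : seq nat.
Hypothesis textT : is_text T.

Lemma text_size_gt0 : 0 < size T.
Proof. by case/andP: textT. Qed.

Lemma text_last_lt p : p < (size T).-1 -> last 0 T < nth 0 T p.
Proof.
case/andP: textT => _ /(all_nthP 0) lt hp.
by rewrite -(nth_take 0 hp); apply: lt; rewrite size_takel // leq_pred.
Qed.

Lemma text_last_uniq p : p < size T -> nth 0 T p = last 0 T -> p = (size T).-1.
Proof.
move=> hp e; case: (ltnP p (size T).-1) => [lt|]; last by lia.
by have := text_last_lt lt; rewrite e ltnn.
Qed.

Lemma text_rcons : T = rcons (take (size T).-1 T) (last 0 T).
Proof.
have n0 := text_size_gt0.
by rewrite -nth_last -take_nth ?prednK ?take_size // ltn_predL.
Qed.

Lemma text_body_gt_last : all (fun c => last 0 T < c) (take (size T).-1 T).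
Proof. by case/andP: textT. Qed.

Lemma shared_block_head a b m :
  0 < m -> take m (drop a T) = take m (drop b T) -> nth 0 T a = nth 0 T b.
Proof. by move=> m0 /(congr1 (nth 0 ^~ 0)); rewrite !nth_take // !nth_drop !addn0. Qed.

(* The last letter of such a block is the sentinel, which occurs only once. *)
Lemma shared_block_end a b m :
  0 < m -> take m (drop a T) = take m (drop b T) ->
  a + m = size T -> b + m <= size T -> a = b.
Proof.
move=> m0 e am bm; have m1 : m.-1 < m by rewrite ltn_predL.
have /(congr1 (nth 0 ^~ m.-1)) := e; rewrite !nth_take // !nth_drop => eab.
have : b + m.-1 = (size T).-1.
  apply: text_last_uniq; first by lia.
  by rewrite -eab -nth_last; congr nth; lia.
lia.
Qed.

End Text.

Lemma IPA_lt_of_colex (T : seq nat) a b :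
  1 <= a <= size T -> colex_lt (take a T) (take b T) -> IPA T a < IPA T b.
Proof.
move=> ha ab; rewrite /IPA ltnS.
set Pa := fun j => colex_lt (prefix_of T j) (prefix_of T a).
set Pb := fun j => colex_lt (prefix_of T j) (prefix_of T b).
have := count_predUI Pa (pred1 a) (iota 1 (size T)).
have -> : count (predI Pa (pred1 a)) (iota 1 (size T)) = 0.
  apply/eqP; rewrite -leqn0 leqNgt -has_count; apply/hasP => -[j _ /andP[pj /eqP ej]].
  by move: pj; rewrite /Pa ej colex_ltxx.
have -> : count (pred1 a) (iota 1 (size T)) = 1.
  by rewrite (count_uniq_mem _ (iota_uniq _ _)) mem_iota; case/andP: ha => a1 an; rewrite a1 /=; lia.
have : count (predU Pa (pred1 a)) (iota 1 (size T)) <= count Pb (iota 1 (size T)).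
  by apply: sub_count => j /orP[pj|/eqP ->] //; exact: colex_lt_trans pj ab.
lia.
Qed.

Lemma IPA_lt (T : seq nat) a b : 1 <= a <= size T -> 1 <= b <= size T ->
  (IPA T a < IPA T b) = colex_lt (take a T) (take b T).
Proof.
move=> ha hb; case ab: (colex_lt _ _); first exact: IPA_lt_of_colex.
apply/negbTE; rewrite -leqNgt.
case: (colex_nlt_eqVgt (negbT ab)) => [/(congr1 size)|ba]; last exact/ltnW/IPA_lt_of_colex.
by rewrite !size_takel; [move->| case/andP: hb | case/andP: ha].
Qed.

Lemma IPA_inj (T : seq nat) a b : 1 <= a <= size T -> 1 <= b <= size T ->
  IPA T a = IPA T b -> a = b.
Proof.
move=> ha hb e; case: (eqVneq a b) => // ne.
have [[_ an] [_ bn]] := (andP ha, andP hb).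
have : take a T != take b T.
  by apply: contraNneq ne => /(congr1 size); rewrite !size_takel // => ->.
by case/colex_lt_total/orP => /IPA_lt_of_colex; [move/(_ ha)| move/(_ hb)]; rewrite e ltnn.
Qed.

Lemma colex_take_shared (T : seq nat) a b m :
  take m (drop a T) = take m (drop b T) ->
  colex_lt (take (a + m) T) (take (b + m) T) = colex_lt (take a T) (take b T).
Proof. by move=> e; rewrite !takeD e colex_lt_catr. Qed.

Lemma IPA_lt_shared (T : seq nat) a b : 1 <= a <= size T -> 1 <= b <= size T ->
  nth 0 T a.-1 = nth 0 T b.-1 ->
  (IPA T a < IPA T b) = colex_lt (take a.-1 T) (take b.-1 T).
Proof.
move=> ha hb e.
have takeE x : 1 <= x <= size T -> take x T = rcons (take x.-1 T) (nth 0 T x.-1).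
  by move=> hx; rewrite -take_nth prednK //; lia.
by rewrite IPA_lt // (takeE a) // (takeE b) // e -!cats1 colex_lt_catr.
Qed.

Lemma IPA_lt_block (T : seq nat) a b m : 1 <= a <= size T -> 1 <= b <= size T ->
  0 < m -> take m (drop a.-1 T) = take m (drop b.-1 T) ->
  (IPA T a < IPA T b) = colex_lt (take (a.-1 + m) T) (take (b.-1 + m) T).
Proof.
by move=> ha hb m0 e; rewrite colex_take_shared // IPA_lt_shared // (shared_block_head m0 e).
Qed.

Lemma bigmax_seq_witness (I : eqType) (r : seq I) (P : pred I) (F : I -> nat) :
  0 < \max_(i <- r | P i) F i ->
  exists2 i, (i \in r) && P i & F i = \max_(i <- r | P i) F i.
Proof.
rewrite big_seq_cond; elim/big_rec: _ => // i m ri IH.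
case: (leqP m (F i)) => [le|lt] _; first by exists i; rewrite // (maxn_idPl le).
by have [|j rj e] := IH; [lia | exists j; rewrite // e; apply/esym/maxn_idPr/ltnW].
Qed.

Section LPF.

Variable T : seq nat.

Lemma LPF_ge i j : 1 <= j <= size T -> IPA T j < IPA T i -> rlce T j i <= LPF T i.
Proof.
move=> hj lt; rewrite /LPF ifN; last by move: lt; rewrite /IPA; lia.
by apply: (leq_bigmax_seq j) => //; rewrite mem_iota; lia.
Qed.

Lemma LPF_le i L :
  (forall j, 1 <= j <= size T -> IPA T j < IPA T i -> rlce T j i <= L) -> LPF T i <= L.
Proof.
move=> ub; rewrite /LPF; case: ifP => // _.
by apply/bigmax_leqP_seq => j; rewrite mem_iota => hj; apply: ub; lia.
Qed.

Lemma LPF_witness i : 0 < LPF T i ->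
  exists j, [/\ 1 <= j <= size T, IPA T j < IPA T i & rlce T j i = LPF T i].
Proof.
rewrite /LPF; case: ifP => // _ /bigmax_seq_witness[j /andP[+ lt] e].
by rewrite mem_iota => hj; exists j; split => //; lia.
Qed.

Lemma LPF_ge_shared a b m : 1 <= a <= size T -> 1 <= b <= size T ->
  0 < m -> a.-1 + m <= size T -> take m (drop a.-1 T) = take m (drop b.-1 T) ->
  colex_lt (take a.-1 T) (take b.-1 T) -> m <= LPF T b.
Proof.
move=> ha hb m0 am e lt.
apply: leq_trans (LPF_ge ha _); last by rewrite IPA_lt_shared // (shared_block_head m0 e).
by rewrite /rlce /suffix_of leq_lcp size_drop e eqxx andbT; lia.
Qed.

Hypothesis textT : is_text T.

Lemma add_LPF_le_size i : 1 <= i <= size T -> i + LPF T i <= size T.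
Proof.
move=> hi; case: (posnP (LPF T i)) => [->|pos]; first by rewrite addn0; case/andP: hi.
have [j [hj lt]] := LPF_witness pos; rewrite /rlce /suffix_of.
set l := LPF T i in pos * => e.
have lj : l <= size T - j.-1 by rewrite -e -size_drop lcp_le_size.
have li : l <= size T - i.-1 by rewrite -e lcp_sym -size_drop lcp_le_size.
have sh : take l (drop i.-1 T) = take l (drop j.-1 T) by rewrite -e take_lcp.
have ji : j != i by apply: contraTneq lt => ->; rewrite ltnn.
rewrite leqNgt; apply/negP => over.
have : i.-1 = j.-1 by apply: (shared_block_end textT pos sh); lia.
lia.
Qed.

End LPF.

Lemma sorted_colex_nth (X : Type) (key : X -> seq nat) (x0 : X) (s : seq X) a b :
  a <= b -> b < size s ->
  let s' := sort (fun u v => ~~ colex_lt (key v) (key u)) s in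
  ~~ colex_lt (key (nth x0 s' b)) (key (nth x0 s' a)).
Proof.
set leT := fun u v => ~~ colex_lt (key v) (key u).
have tr : transitive leT by move=> y x z; exact: colex_le_trans.
have rf : reflexive leT by move=> x; rewrite /leT colex_ltxx.
have tot : total leT.
  by move=> x y; rewrite /leT; case h: colex_lt => //=; apply: colex_lt_asym.
move=> ab bs; apply: (sorted_leq_nth tr rf x0 (sort_sorted tot s)) => //;
  rewrite inE size_sort; lia.
Qed.

Section StColexMinus.

Variable T : seq nat.

Lemma st_colex_minusP x :
  reflect (exists2 i, 1 <= i <= size T & x = i + LPF T i) (x \in st_colex_minus T).
Proof.
rewrite mem_sort mem_undup; apply: (iffP mapP) => -[i hi ->]; exists i => //.
- by move: hi; rewrite mem_iota; lia.
- by rewrite mem_iota; lia.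
Qed.

Lemma uniq_st_colex_minus : uniq (st_colex_minus T).
Proof. by rewrite sort_uniq undup_uniq. Qed.

Lemma st_colex_minus_sorted a b : a <= b -> b < size (st_colex_minus T) ->
  ~~ colex_lt (take (nth 0 (st_colex_minus T) b) T) (take (nth 0 (st_colex_minus T) a) T).
Proof.
by move=> ab; rewrite size_sort => /(sorted_colex_nth (prefix_of T) 0 ab).
Qed.

Hypothesis textT : is_text T.

Lemma st_colex_minus_range x : x \in st_colex_minus T -> 1 <= x <= size T.
Proof. by case/st_colex_minusP => i hi ->; have := add_LPF_le_size textT hi; lia. Qed.

Lemma take_gt_last k : k < size T -> all (fun c => last 0 T < c) (take k T).
Proof.
move=> hk; apply/allP => c hc; apply: (allP (text_body_gt_last textT)).
by rewrite -[take k T](take_takel _ (_ : k <= (size T).-1)) in hc; [apply: mem_take hc | lia].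
Qed.

Lemma rot_text k : k < size T ->
  rot k T = drop k (take (size T).-1 T) ++ last 0 T :: take k T.
Proof.
move=> hk; have n0 := text_size_gt0 textT.
have hk' : k <= size (take (size T).-1 T) by rewrite size_takel; lia.
rewrite /rot {1}(text_rcons textT) -cats1 drop_cat; case: ltnP => ge; first by rewrite -catA.
by rewrite (drop_oversize ge) (_ : k - _ = 0) //; lia.
Qed.

(* The sentinel is smaller than every letter of the prefixes. *)
Lemma colex_lt_rot a b : a < size T -> b < size T ->
  colex_lt (rot a T) (rot b T) = colex_lt (take a T) (take b T).
Proof.
move=> ha hb; case: (eqVneq a b) => [->|ne]; first by rewrite !colex_ltxx.
rewrite !rot_text // colex_lt_sentinel ?take_gt_last //.
by apply: contra ne => /eqP/(congr1 size); rewrite !size_takel ?(ltnW ha) ?(ltnW hb) // => ->.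
Qed.

Lemma rot_text_inj a b : a < size T -> b < size T -> rot a T = rot b T -> a = b.
Proof.
move=> ha hb e; have : ~~ colex_lt (take a T) (take b T) && ~~ colex_lt (take b T) (take a T).
  by rewrite -!colex_lt_rot // e colex_ltxx.
case/andP => /colex_nlt_eqVgt[/(congr1 size)|]; last by move=> ->.
by rewrite !size_takel // ltnW.
Qed.

End StColexMinus.

Lemma head_rot (T : seq nat) k : k < size T -> head 0 (rot k T) = nth 0 T k.
Proof. by move=> hk; rewrite /rot (drop_nth 0 hk). Qed.

(* The witness is position [|y| + 1]: it precedes [i] in IPA order and shares
   [w] and the next letter with [i]. *)
Lemma LPF_gt_extension (T : seq nat) i x y l :
  1 <= i <= size T -> i.-1 + l < size T -> x < size T ->
  take x T = y ++ take l (drop i.-1 T) ->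
  colex_lt (take x T) (take (i.-1 + l) T) -> nth 0 T x = nth 0 T (i.-1 + l) ->
  l < LPF T i.
Proof.
move=> hi il hx ex lt c; set w := take l (drop i.-1 T) in ex.
have sx : x = size y + l.
  by rewrite -(size_takel (ltnW hx)) ex size_cat size_takel // size_drop; lia.
have wy : take l (drop (size y) T) = w by rewrite take_drop addnC -sx ex drop_size_cat.
have sh : take l.+1 (drop (size y) T) = take l.+1 (drop i.-1 T).
  by rewrite !(take_nth 0) ?size_drop ?nth_drop ?wy -?sx ?c //; lia.
apply: (LPF_ge_shared (a := (size y).+1)) => //=; try lia.
by rewrite -(colex_take_shared wy) -sx.
Qed.

Lemma st_colex_minus_run_head (T : seq nat) j f :
  is_text T -> j \in st_colex_minus T -> f < size T ->
  colex_lt (take f T) (take j.-1 T) ->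
  (forall g, g < size T -> colex_lt (take f T) (take g T) ->
     ~~ colex_lt (take g T) (take j.-1 T)) ->
  nth 0 T f != nth 0 T j.-1.
Proof.
move=> textT /st_colex_minusP[i hi ->] hf lt between; apply/eqP => c.
have bound := add_LPF_le_size textT hi.
have ej : (i + LPF T i).-1 = i.-1 + LPF T i by lia.
rewrite ej in lt between c.
case: (posnP (LPF T i)) => [l0 | lpos].
- rewrite l0 in lt c bound.
  have : 0 < LPF T i; last by rewrite l0.
  by apply: (LPF_gt_extension (x := f) (y := take f T)); rewrite ?take0 ?cats0 //; lia.
- have [j' [hj' lt' e]] := LPF_witness lpos; move: e; rewrite /rlce /suffix_of.
  move el: (LPF T i) => l e; rewrite el in lpos lt between c bound.
  pose w := take l (drop i.-1 T).
  have sh : take l (drop j'.-1 T) = w by rewrite /w -e take_lcp.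
  have ne : j' != i by apply: contraTneq lt' => ->; rewrite ltnn.
  have g_lt : j'.-1 + l < size T.
    rewrite ltnNge; apply: contra ne => over.
    have lj' : l <= size T - j'.-1 by rewrite -e -size_drop lcp_le_size.
    have : j'.-1 = i.-1 by apply: (shared_block_end textT lpos sh); lia.
    lia.
  have gx : colex_lt (take (j'.-1 + l) T) (take (i.-1 + l) T).
    by rewrite -IPA_lt_block // sh.
  have [y ey] : exists y, take f T = y ++ w.
    apply: (colex_between_suffix (u1 := take j'.-1 T) (u2 := take i.-1 T)).
      by rewrite -sh -(takeD j'.-1); apply: contraL gx; exact: between g_lt.
    by rewrite /w -(takeD i.-1); apply: colex_lt_asym.
  have il : i.-1 + l < size T by lia.
  by have := LPF_gt_extension hi il hf ey lt c; rewrite el ltnn.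
Qed.

Definition run_start (h : seq nat) q := (q == 0) || (nth 0 h q.-1 != nth 0 h q).

Lemma runsE h : runs h = count (run_start h) (iota 0 (size h)).
Proof.
case: h => [|x s] //=; rewrite /run_start /= add1n; congr _.+1.
rewrite (@eq_in_count _ _ (fun q => nth 0 (x :: s) q.-1 != nth 0 (x :: s) q)); last first.
  by move=> q; rewrite mem_iota => /andP[q1 _]; rewrite -[q]prednK.
elim: s x => [|y s IH] x //=; rewrite IH (iotaDl 1 1) count_map.
by congr (_ + _); apply: eq_in_count => q; rewrite mem_iota => /andP[+ _]; case: q.
Qed.

Definition colex_rotations (T : seq nat) : seq (seq nat) :=
  sort (fun u v => ~~ colex_lt v u) [seq rot k T | k <- iota 0 (size T)].

Section ColexRotations.

Variable T : seq nat.
Hypothesis textT : is_text T.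
Local Notation R := (colex_rotations T).

Lemma size_colex_rotations : size R = size T.
Proof. by rewrite size_sort size_map size_iota. Qed.

Lemma colex_rotationsP u : reflect (exists2 k, k < size T & u = rot k T) (u \in R).
Proof.
rewrite mem_sort; apply: (iffP mapP) => -[k hk ->]; exists k => //.
- by move: hk; rewrite mem_iota.
- by rewrite mem_iota.
Qed.

Lemma uniq_colex_rotations : uniq R.
Proof.
rewrite sort_uniq map_inj_in_uniq ?iota_uniq // => a b.
by rewrite !mem_iota /= => ha hb; apply: rot_text_inj.
Qed.

Lemma colex_rotations_sorted a b : a <= b -> b < size T ->
  ~~ colex_lt (nth [::] R b) (nth [::] R a).
Proof. by move=> ab bn; apply: (sorted_colex_nth id [::] ab); rewrite size_map size_iota. Qed.

Lemma rot_in_colex_rotations k : k < size T -> rot k T \in R.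
Proof. by move=> hk; apply/colex_rotationsP; exists k. Qed.

Lemma index_rot_lt k : k < size T -> index (rot k T) R < size T.
Proof. by move=> /rot_in_colex_rotations; rewrite -index_mem size_colex_rotations. Qed.

Lemma nth_index_rot k : k < size T -> nth [::] R (index (rot k T) R) = rot k T.
Proof. by move=> /rot_in_colex_rotations/nth_index. Qed.

Lemma run_start_st_colex_minus j : j \in st_colex_minus T ->
  run_start [seq head 0 u | u <- R] (index (rot j.-1 T) R).
Proof.
move=> jS; have /andP[j1 jn] := st_colex_minus_range textT jS.
have jn' : j.-1 < size T by lia.
set q := index _ R; have qn := index_rot_lt jn'; have Rq := nth_index_rot jn'.
rewrite /run_start; case: eqVneq => //= q0.
have qn' : q.-1 < size T by lia.
have q'R : q.-1 < size R by rewrite size_colex_rotations.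
have /colex_rotationsP[f hf ef] := mem_nth [::] q'R.
rewrite !(nth_map [::]) ?size_colex_rotations // ef Rq !head_rot //.
apply: st_colex_minus_run_head => //.
- rewrite -colex_lt_rot //.
  have := colex_rotations_sorted (leq_pred q) qn; rewrite ef Rq => /colex_nlt_eqVgt[e|//].
  have qR : q < size R by rewrite size_colex_rotations.
  have := nth_uniq [::] q'R qR uniq_colex_rotations.
  by rewrite ef Rq e eqxx; lia.
- move=> g hg; rewrite -!colex_lt_rot // => fg.
  have pn := index_rot_lt hg; have Rp := nth_index_rot hg.
  case: (ltnP (index (rot g T) R) q) => pq.
  + have pq' : index (rot g T) R <= q.-1 by lia.
    by have := colex_rotations_sorted pq' qn'; rewrite Rp ef fg.
  + by have := colex_rotations_sorted pq pn; rewrite Rp Rq.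
Qed.

End ColexRotations.

Lemma size_st_colex_minus_le_rbar (T : seq nat) :
  is_text T -> size (st_colex_minus T) <= rbar T.
Proof.
move=> textT.
have -> : rbar T = runs [seq head 0 u | u <- colex_rotations T] by [].
rewrite runsE size_map size_colex_rotations -size_filter.
pose pos j := index (rot j.-1 T) (colex_rotations T).
rewrite -(size_map pos); apply: uniq_leq_size.
- rewrite map_inj_in_uniq ?uniq_st_colex_minus // => a b aS bS.
  have /andP[a1 an] := st_colex_minus_range textT aS.
  have /andP[b1 bn] := st_colex_minus_range textT bS.
  have [aR bR] : a.-1 < size T /\ b.-1 < size T by lia.
  move=> e; have : rot a.-1 T = rot b.-1 T.
    by apply: (index_inj [::] _ _ e); apply: rot_in_colex_rotations.
  by move/(rot_text_inj textT aR bR); lia.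
- move=> q /mapP[j jS ->]; rewrite mem_filter run_start_st_colex_minus // mem_iota /=.
  by apply: index_rot_lt; have := st_colex_minus_range textT jS; lia.
Qed.

Section Occurrences.

Variable T : seq nat.

Lemma occursP w i :
  reflect [/\ 1 <= i, i <= size T & take (size w) (drop i.-1 T) = w] (occurs T w i).
Proof. by rewrite /occurs -andbA; apply: (iffP and3P) => -[-> -> /eqP]. Qed.

Lemma occurs_take w k i : k <= size w -> occurs T w i -> occurs T (take k w) i.
Proof.
move=> kw /occursP[i1 iT e]; apply/occursP; split => //.
by rewrite size_takel // -e take_takel.
Qed.

Lemma occurs_end w i : occurs T w i -> i.-1 + size w <= size T.
Proof.
case/occursP => _ iT e.
have : size w <= size (drop i.-1 T) by rewrite -e size_take_min geq_minr.
rewrite size_drop; lia.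
Qed.

Lemma take_occurs w i : occurs T w i -> take (i.-1 + size w) T = take i.-1 T ++ w.
Proof. by case/occursP => _ _ e; rewrite takeD e. Qed.

Lemma occurs_suffix x y w :
  0 < size w -> x <= size T -> take x T = y ++ w -> occurs T w (size y).+1.
Proof.
move=> w0 xn e; have sx : x = size y + size w by rewrite -size_cat -e size_takel.
apply/occursP; split => //=; first by lia.
by rewrite take_drop addnC -sx e drop_size_cat.
Qed.

Lemma occurs_rcons w c i : occurs T (rcons w c) i -> occurs T w i.
Proof.
have ww : size w <= size (rcons w c) by rewrite size_rcons.
by move/(occurs_take ww); rewrite -cats1 take_size_cat.
Qed.

Lemma primary_exists w : (exists i, occurs T w i) -> exists i, is_primary T w i.
Proof.
case=> i0 o0; have /ex_minnP[v /hasP[i _ /andP[oi /eqP ei]] vmin] :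
    exists v, has (fun i => occurs T w i && (IPA T i == v)) (iota 1 (size T)).
  exists (IPA T i0); apply/hasP; exists i0; rewrite ?o0 ?eqxx //.
  by case/occursP: o0 => *; rewrite mem_iota; lia.
exists i; split => // j oj; rewrite ei; apply: vmin; apply/hasP; exists j; rewrite ?oj ?eqxx //.
by case/occursP: oj => *; rewrite mem_iota; lia.
Qed.

Lemma primary_rlce_lt w i j : is_primary T w i -> 1 <= j <= size T ->
  IPA T j < IPA T i -> rlce T j i < size w.
Proof.
move=> [/occursP[_ _ e] imin] /andP[j1 jT] lt; rewrite ltnNge; apply: contraL lt => le.
move: le; rewrite leq_lcp /suffix_of => /andP[_ /eqP ej].
by rewrite -leqNgt; apply: imin; apply/occursP; split; rewrite // ej.
Qed.

Lemma LPF_lt_primary w i : 0 < size w -> is_primary T w i -> LPF T i < size w.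
Proof.
move=> w0 pi; rewrite -(prednK w0) ltnS; apply: LPF_le => j hj lt.
by have := primary_rlce_lt pi hj lt; lia.
Qed.

Lemma primary_prefix P k i : k <= size P ->
  is_primary T (take k P) i -> occurs T P i -> is_primary T P i.
Proof. by move=> kP [_ imin] oi; split=> // j /(occurs_take kP)/imin. Qed.

Lemma LPF_primary_branch w c i i' : occurs T w i -> IPA T i < IPA T i' ->
  is_primary T (rcons w c) i' -> LPF T i' = size w.
Proof.
move=> oi lt pi'; apply/eqP; rewrite eqn_leq -ltnS.
have := LPF_lt_primary _ pi'; rewrite size_rcons => -> //=.
have ie := occurs_end oi.
case/occursP: oi (occurs_rcons pi'.1) => i1 iT ei /occursP[_ _ ei'].
apply: leq_trans (LPF_ge (_ : 1 <= i <= size T) lt); last by rewrite i1.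
by rewrite leq_lcp /suffix_of size_drop ei ei' eqxx andbT; lia.
Qed.

Lemma followers_mem w i : occurs T w i -> i.-1 + size w < size T ->
  nth 0 T (i.-1 + size w) \in followers T w.
Proof.
case/occursP => i1 iT ei ie; apply/mapP; exists i => //.
by rewrite mem_filter ie /extract ei eqxx mem_iota; lia.
Qed.

Hypothesis textT : is_text T.

Lemma right_maximal_branch w c i i' : 0 < size w ->
  occurs T w i -> ~~ occurs T (rcons w c) i -> occurs T (rcons w c) i' ->
  right_maximal T w.
Proof.
move=> w0 oi noi oi'; have oi'w := occurs_rcons oi'.
have ne : i != i' by apply: contraNneq noi => ->.
have ie : i.-1 + size w < size T.
  (* otherwise the sentinel would end both occurrences of [w] *)
  rewrite ltn_neqAle occurs_end // andbT; apply: contra ne => /eqP ie.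
  case/occursP: (oi) (oi'w) => i1 _ ei /occursP[i'1 _ ei'].
  have : i.-1 = i'.-1.
    by apply: (shared_block_end textT w0 (etrans ei (esym ei')) ie); apply: occurs_end.
  lia.
have i'e : i'.-1 + size w < size T by have := occurs_end oi'; rewrite size_rcons addnS.
have nextE j : occurs T w j -> j.-1 + size w < size T ->
    occurs T (rcons w c) j = (nth 0 T (j.-1 + size w) == c).
  case/occursP => j1 jT ej je; apply/occursP/eqP => [[_ _ e]|e].
    have := congr1 (nth 0 ^~ (size w)) e.
    by rewrite nth_rcons ltnn eqxx nth_take ?size_rcons // nth_drop.
  split => //; rewrite size_rcons (take_nth 0) ?size_drop ?nth_drop ?ej ?e //; lia.
have ci' : nth 0 T (i'.-1 + size w) = c by apply/eqP; rewrite -nextE.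
have : uniq [:: nth 0 T (i.-1 + size w); c] by rewrite /= inE andbT -nextE.
move/uniq_leq_size => /(_ (undup (followers T w))); apply => x.
rewrite !inE mem_undup => /orP[/eqP->|/eqP->]; first exact: followers_mem.
by rewrite -ci'; apply: followers_mem.
Qed.

End Occurrences.

Lemma occurs_take_lcp (T P : seq nat) i m : 1 <= i <= size T -> m <= size P ->
  occurs T (take m P) i = (m <= lcp (extract T i (size P)) P).
Proof.
move=> /andP[i1 iT] mP; rewrite leq_lcp /extract take_takel // size_take_min leq_min mP /=.
apply/occursP/andP; rewrite (size_takel mP); last by case=> _ /eqP e; split.
case=> _ _ e; rewrite e eqxx; split => //; move/(congr1 size): e.
by rewrite size_take_min size_takel // => /minn_idPl.
Qed.

Lemma lcp_mismatch (T P : seq nat) k i :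
  k <= size P -> occurs T (take k P) i -> extract T i (size P) != P ->
  let L := lcp (extract T i (size P)) P in
  [/\ k <= L, L < size P, occurs T (take L P) i & ~~ occurs T (take L.+1 P) i].
Proof.
move=> kP oi sP L; have hi : 1 <= i <= size T by case/occursP: oi => -> ->.
have LP : L <= size P by rewrite /L lcp_sym lcp_le_size.
have LP' : L < size P.
  rewrite ltn_neqAle LP andbT; apply: contra sP => /eqP eL.
  have : occurs T (take (size P) P) i by rewrite occurs_take_lcp // -/L eL.
  by rewrite take_size => /occursP[_ _]; rewrite /extract => ->.
split => //; first by rewrite -occurs_take_lcp.
  by rewrite occurs_take_lcp.
by rewrite occurs_take_lcp // -/L ltnn.
Qed.

(* Binary search in [A[lo, hi)] for the first entry [j] with [T[1, j]] not
   colex-smaller than [w]; comparing the last [|w|] letters of [T[1, j]] with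
   [w] decides this. *)
Fixpoint bsearch (B : nat) (w : seq nat) (fuel lo hi : nat) (kont : nat -> prog) : prog :=
  if fuel is fuel'.+1 then
    if lo < hi then
      let mid := (lo + hi) %/ 2 in
      ReadBlock (mid %/ B) (fun blk =>
        let j := nth 0 blk (mid %% B) in
        Extract (j - size w).+1 (minn j (size w)) (fun s =>
          if colex_lt s w then bsearch B w fuel' mid.+1 hi kont
          else bsearch B w fuel' lo mid kont))
    else kont lo
  else kont lo.

(* Read [A[q] = i - 1 + k], i.e. the end of the primary occurrence [i] of
   [P[1, k]], and compare [T[i, i + m - 1]] with [P]. *)
Definition verify (B : nat) (P : seq nat) (k : nat) (next : nat -> prog) (q : nat) : prog :=
  ReadBlock (q %/ B) (fun blk =>
    let i := (nth 0 blk (q %% B) - k).+1 in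
    Extract i (size P) (fun s => if s == P then Ret i else next (lcp s P).+1)).

Definition round (B N : nat) (P : seq nat) (k : nat) (next : nat -> prog) : prog :=
  bsearch B (take k P) N.+1 0 N (verify B P k next).

Fixpoint rounds (B N : nat) (P : seq nat) (fuel k : nat) : prog :=
  if fuel is fuel'.+1 then round B N P k (rounds B N P fuel') else Ret 0.

Definition locate (B N : nat) (P : seq nat) : prog := rounds B N P (size P) 1.

Definition charge (c : nat) (r : nat * nat) : nat * nat := (r.1, c + r.2).

Definition nbits (n : nat) : nat := if n == 0 then 0 else (trunc_log 2 n).+1.

Lemma nbits_half n m : 0 < n -> m <= n %/ 2 -> (nbits m).+1 <= nbits n.
Proof.
move=> n0 mn; rewrite /nbits (negbTE (lt0n_neq0 n0)).
case: (eqVneq m 0) => [//|m0]; have n1 : 1 < n by lia.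
by rewrite (trunc_log2S n1) !ltnS -divn2; apply: leq_trunc_log.
Qed.

Lemma nbits_le n : nbits n <= (trunc_log 2 n).+1.
Proof. by rewrite /nbits; case: eqP. Qed.

Lemma read_block_nth (A : seq nat) B q :
  0 < B -> nth 0 (take B (drop (q %/ B * B) A)) (q %% B) = nth 0 A q.
Proof. by move=> B0; rewrite nth_take ?ltn_pmod // nth_drop -divn_eq. Qed.

Lemma colex_lt_extract_suffix (T w : seq nat) j : j <= size T ->
  colex_lt (extract T (j - size w).+1 (minn j (size w))) w = colex_lt (take j T) w.
Proof.
move=> jT; rewrite /extract /=.
have -> : take j T = take (j - size w) T ++ take (minn j (size w)) (drop (j - size w) T).
  by rewrite -takeD; congr take; lia.
case: (leqP (size w) j) => wj; last by rewrite (_ : j - size w = 0) ?take0 //; lia.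
by rewrite colex_lt_catl // size_takel ?size_drop; lia.
Qed.

Section BinarySearch.

Variables (T A : seq nat) (B : nat) (w : seq nat).
Hypothesis B0 : 0 < B.
Hypothesis A_le : forall x, x \in A -> x <= size T.
Hypothesis A_mono : forall a b, a <= b -> b < size A ->
  ~~ colex_lt (take (nth 0 A a) T) w -> ~~ colex_lt (take (nth 0 A b) T) w.

Lemma bsearch_spec fuel lo hi kont : hi <= size A -> lo <= hi -> hi - lo < fuel ->
  (forall q, q < lo -> colex_lt (take (nth 0 A q) T) w) ->
  (hi < size A -> ~~ colex_lt (take (nth 0 A hi) T) w) ->
  exists q c, [/\ forall q', q' < q -> colex_lt (take (nth 0 A q') T) w,
    q < size A -> ~~ colex_lt (take (nth 0 A q) T) w,
    c <= nbits (hi - lo) * (2 + size w %/ B) &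
    run T A B (bsearch B w fuel lo hi kont) = charge c (run T A B (kont q))].
Proof.
elim: fuel lo hi => [|fuel IH] lo hi hiA lohi; first by [].
move=> hf below above /=; case: ltnP => lh; last first.
  have elo : lo = hi by lia.
  subst lo; exists hi, 0; split => //.
  by rewrite /charge add0n -surjective_pairing.
set mid := (lo + hi) %/ 2; have [lm mh] : lo <= mid /\ mid < hi by rewrite /mid; lia.
have midA : nth 0 A mid \in A by apply: mem_nth; exact: leq_trans mh hiA.
have step : 1 + (1 + minn (nth 0 A mid) (size w) %/ B) <= 2 + size w %/ B.
  by have : minn (nth 0 A mid) (size w) %/ B <= size w %/ B by apply/leq_div2r/geq_minr.
rewrite /= read_block_nth // colex_lt_extract_suffix ?A_le //; case: ifP => cm.
- have below' q : q < mid.+1 -> colex_lt (take (nth 0 A q) T) w.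
    move=> qm; case: (ltnP q lo) => [|ql]; first exact: below.
    by apply: contraTT cm; apply: A_mono; lia.
  have [|q [c [h1 h2 h3 ->]]] := IH mid.+1 hi hiA mh _ below' above; first lia.
  exists q, (1 + (1 + minn (nth 0 A mid) (size w) %/ B) + c); split => //.
    have : (nbits (hi - mid.+1)).+1 <= nbits (hi - lo) by apply: nbits_half; rewrite /mid; lia.
    nia.
  by rewrite /charge /=; congr pair; lia.
- have [||q [c [h1 h2 h3 ->]]] := IH lo mid _ lm _ below (fun _ => negbT cm); try lia.
  exists q, (1 + (1 + minn (nth 0 A mid) (size w) %/ B) + c); split => //.
    have : (nbits (mid - lo)).+1 <= nbits (hi - lo) by apply: nbits_half; rewrite /mid; lia.
    nia.
  by rewrite /charge /=; congr pair; lia.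
Qed.

End BinarySearch.

Lemma primary_first_colex_ge (T w : seq nat) i x : 0 < size w -> is_primary T w i ->
  x <= size T -> ~~ colex_lt (take x T) w ->
  ~~ colex_lt (take (i.-1 + size w) T) (take x T) -> x = i.-1 + size w.
Proof.
move=> w0 [oi imin] xT ge le; rewrite take_occurs // in le.
have [y ey] := colex_between_suffix (u1 := [::]) ge le.
have oy := occurs_suffix w0 xT ey.
have sx : x = size y + size w by rewrite -size_cat -ey size_takel.
case/occursP: (oi) (oy) => i1 iT ei /occursP[_ yT ey'].
have hi : 1 <= i <= size T by rewrite i1 iT.
have hy : 1 <= (size y).+1 <= size T by rewrite yT.
have : IPA T i <= IPA T (size y).+1 by apply: imin.
rewrite leq_eqVlt (IPA_lt_block hi hy w0 (etrans ei (esym ey'))) /= -sx (take_occurs oi).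
by rewrite (negbTE le) orbF => /eqP/(IPA_inj hi hy); lia.
Qed.

Lemma primary_end_mem (T w : seq nat) i : 0 < size w -> is_primary T w i ->
  LPF T i = (size w).-1 -> i.-1 + size w \in st_colex_minus T.
Proof.
move=> w0 [/occursP[i1 iT _] _] e; apply/st_colex_minusP; exists i; first by rewrite i1.
by rewrite e; lia.
Qed.

Definition anchored (T P : seq nat) (k : nat) : Prop :=
  exists2 i, is_primary T (take k P) i & i.-1 + k \in st_colex_minus T.

Lemma anchored1 (T P : seq nat) : 0 < size P -> (exists i, occurs T P i) -> anchored T P 1.
Proof.
move=> P0 [i0 oi0]; have sP1 : size (take 1 P) = 1 by rewrite size_takel.
have [i pi] : exists i, is_primary T (take 1 P) i.
  by apply: primary_exists; exists i0; apply: occurs_take.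
exists i => //; rewrite -[X in _ + X]sP1; apply: primary_end_mem; rewrite ?sP1 //.
by have := LPF_lt_primary _ pi; rewrite sP1; lia.
Qed.

Section Search.

Variables (T : seq nat) (B : nat) (P : seq nat).
Hypotheses (textT : is_text T) (B0 : 0 < B) (occP : exists i, occurs T P i).
Local Notation S := (st_colex_minus T).
Local Notation cost := ((trunc_log 2 (size S)).+1 * (1 + size P %/ B)).

Lemma bsearch_anchor k i kont : 1 <= k <= size P ->
  is_primary T (take k P) i -> i.-1 + k \in S ->
  exists2 c, c <= 2 * cost &
    run T S B (bsearch B (take k P) (size S).+1 0 (size S) kont) =
    charge c (run T S B (kont (index (i.-1 + k) S))).
Proof.
move=> kP pi iS; set w := take k P; have sw : size w = k by rewrite size_takel; lia.
have S_le x : x \in S -> x <= size T by move/(st_colex_minus_range textT); lia.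
have mono a b : a <= b -> b < size S ->
    ~~ colex_lt (take (nth 0 S a) T) w -> ~~ colex_lt (take (nth 0 S b) T) w.
  by move=> ab bS h; apply: colex_le_trans h (st_colex_minus_sorted ab bS).
have [|||q [c [below ge cB ->]]] :=
  bsearch_spec B0 S_le mono (fuel := (size S).+1) kont (leqnn _) (leq0n _);
  [lia | by [] | by rewrite ltnn |].
set t := index (i.-1 + k) S; have tS : t < size S by rewrite index_mem.
have St : nth 0 S t = i.-1 + k by rewrite nth_index.
have tw : take (i.-1 + k) T = take i.-1 T ++ w by rewrite -[in LHS]sw take_occurs //; case: pi.
have qt : q <= t.
  by rewrite leqNgt; apply/negP => /below; rewrite St tw colex_lt_catl // colex_ltxx.
have qS : q < size S by apply: leq_ltn_trans qt tS.
have Sq : nth 0 S q = i.-1 + k.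
  rewrite -sw; apply: (primary_first_colex_ge _ pi); rewrite ?sw.
  - lia.
  - exact/S_le/mem_nth.
  - exact: ge.
  - by rewrite -St; apply: st_colex_minus_sorted.
exists c; last by rewrite /t -Sq index_uniq // uniq_st_colex_minus.
have wP : size w %/ B <= size P %/ B by apply: leq_div2r; rewrite sw; case/andP: kP.
apply: (leq_trans cB); rewrite subn0.
apply: (leq_trans (leq_mul (nbits_le _) (leq_add (leqnn 2) wP))).
by move: (trunc_log _ _) (size P %/ B) => X Y; nia.
Qed.

Lemma run_verify k next q :
  let i := (nth 0 S q - k).+1 in let s := extract T i (size P) in
  run T S B (verify B P k next q) =
  charge (2 + size P %/ B) (run T S B (if s == P then Ret i else next (lcp s P).+1)).
Proof.
by rewrite /= read_block_nth //; case: ifP => _; rewrite /charge /=; congr pair; lia.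
Qed.

Lemma anchored_mismatch k i : 1 <= k <= size P ->
  is_primary T (take k P) i -> extract T i (size P) != P ->
  let L := lcp (extract T i (size P)) P in
  [/\ k <= L < size P, st_node T (take L P) & anchored T P L.+1].
Proof.
move=> /andP[k1 kP] pi sP L.
have [kL LP oL noL] := lcp_mismatch kP pi.1 sP; rewrite -/L in kL LP oL noL.
have [i' pi'] : exists i', is_primary T (take L.+1 P) i'.
  by apply: primary_exists; case: occP => i0 oi0; exists i0; apply: occurs_take.
have sL : size (take L P) = L by rewrite size_takel // ltnW.
rewrite (take_nth 0 LP) in pi' noL.
have oi' : occurs T (take k P) i'.
  have kL' : k <= size (take L P) by rewrite sL.
  by rewrite -(take_takel _ kL); apply: (occurs_take kL'); exact: occurs_rcons pi'.1.
have lt : IPA T i < IPA T i'.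
  rewrite ltn_neqAle pi.2 // andbT; apply: contraNneq noL => /IPA_inj.
  case/occursP: pi.1 (pi'.1) => i1 iT _ /occursP[i'1 i'T _].
  by rewrite i1 iT i'1 i'T => /(_ isT isT) ->; case: pi'.
have lpf := LPF_primary_branch oL lt pi'; rewrite sL in lpf.
split; first by rewrite kL.
- have L0 : 0 < L by exact: leq_trans k1 kL.
  by rewrite /st_node -size_eq0 sL -lt0n L0 (right_maximal_branch textT _ oL noL pi'.1) ?sL.
- exists i'; first by rewrite (take_nth 0 LP).
  have sL1 : size (rcons (take L P) (nth 0 P L)) = L.+1 by rewrite size_rcons sL.
  by rewrite -[X in _ + X]sL1; apply: primary_end_mem; rewrite ?sL1.
Qed.

Lemma round_spec k next : 1 <= k <= size P -> anchored T P k ->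
  let r := run T S B (round B (size S) P k next) in
  (is_primary T P r.1 /\ r.2 <= 4 * cost) \/
  exists2 L, [/\ k <= L < size P, st_node T (take L P) & anchored T P L.+1] &
    exists2 c, c <= 4 * cost & r = charge c (run T S B (next L.+1)).
Proof.
move=> kP [i pi iS] r; have kP' : k <= size P by case/andP: kP.
have [c cB rE] := bsearch_anchor (verify B P k next) kP pi iS.
have cost_step : c + (2 + size P %/ B) <= 4 * cost.
  by move: (trunc_log _ _) (size P %/ B) cB => X Y; nia.
move: rE; rewrite /r /round => ->; rewrite run_verify nth_index //.
have -> : (i.-1 + k - k).+1 = i by case/occursP: pi.1 => i1 _ _; lia.
case: ifP => [/eqP sP | /negbT sP].
  left; split; last by rewrite /charge /= addn0.
  by apply: (primary_prefix kP' pi); case/occursP: pi.1 => i1 iT _; apply/occursP.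
right; exists (lcp (extract T i (size P)) P); first exact: anchored_mismatch.
by exists (c + (2 + size P %/ B)); rewrite // /charge /= addnA.
Qed.

Lemma rounds_spec fuel k : 1 <= k <= size P -> size P - k < fuel -> anchored T P k ->
  let r := run T S B (rounds B (size S) P fuel k) in
  is_primary T P r.1 /\
  r.2 <= 4 * (count (fun L => st_node T (take L P)) (iota k (size P - k))).+1 * cost.
Proof.
elim: fuel k => [//|fuel IH] k kP kf anc /=.
set nodes := count _ (iota k _).
case: (round_spec (rounds B (size S) P fuel) kP anc) => [[pr rc]|[L [/andP[kL LP] node anc']]].
  by split=> //; apply: (leq_trans rc); move: nodes cost => n x; nia.
move=> [c cc ->]; have [|/=|pr rc] := IH L.+1 _ _ anc'; [lia | lia | split => //].
have -> : nodes = count (fun L => st_node T (take L P)) (iota k (L - k)) +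
                  (count (fun L => st_node T (take L P)) (iota L.+1 (size P - L.+1))).+1.
  rewrite /nodes (_ : size P - k = L - k + (size P - L.+1).+1); last by lia.
  by rewrite iotaD count_cat subnKC //= node addnS.
move: rc cc; rewrite /charge /=.
by move: (count _ _) (count _ _) cost (run _ _ _ _).2 => a b x y; nia.
Qed.

End Search.

Theorem lemma44 :
  (forall T : seq nat, is_text T -> size (st_colex_minus T) <= rbar T) /\
  exists (alg : nat -> nat -> nat -> seq nat -> prog) (C : nat),
    forall (T : seq nat) (B : nat) (P : seq nat),
      is_text T -> 0 < B -> 0 < size P -> (exists i, occurs T P i) ->
      let S := st_colex_minus T in
      let r := run T S B (alg (size T) B (size S) P) in
      is_primary T P r.1 /\
      r.2 <= C * locus_node_depth T P * (trunc_log 2 (size S)).+1 * (1 + size P %/ B).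
Proof.
split; first exact: size_st_colex_minus_le_rbar.
exists (fun _ => locate), 4 => T B P textT B0 P0 occP /=.
have kP : 1 <= 1 <= size P by rewrite P0.
have [] := rounds_spec textT B0 occP (fuel := size P) kP _ (anchored1 P0 occP); first by lia.
by rewrite /locus_node_depth subn1 !mulnA.
Qed.
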